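(* Let $c,d>0$ with $cd\le1$ and $g(x)=xF(c,d;c+d;x)$ for $x\in(0,1)$. Then for all $s,p,q>0$, $$g\!\left(\frac{s^p}{1+s^p}\right)+g\!\left(\frac{s^q}{1+s^q}\right)\ge g\!\left(\frac{s^{p+q}}{1+s^{p+q}}\right).$$
   Context: $F(a,b;c;x)$ is the Gaussian hypergeometric function $\sum_{n\ge0}\frac{(a)_n(b)_n}{(c)_n}\frac{x^n}{n!}$ ($|x|<1$), with $(a)_n=a(a+1)\cdots(a+n-1)$, $(a)_0=1$. *)

From Stdlib Require Import Reals.
Open Scope R_scope.

Fixpoint poch (a : R) (n : nat) : R :=
  match n with
  | O => 1
  | S k => poch a k * (a + INR k)
  end.

Definition hyp_term (a b c x : R) (n : nat) : R :=
  poch a n * poch b n / poch c n * x ^ n / INR (Factorial.fact n).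

Definition is_hyp2F1 (a b c x v : R) : Prop :=
  infinite_sum (hyp_term a b c x) v.

Definition is_g (c d x y : R) : Prop :=
  exists v, is_hyp2F1 c d (c + d) x v /\ y = x * v.

From Stdlib Require Import Reals Lra Psatz.
From Coquelicot Require Import Coquelicot.
Open Scope R_scope.

(* Write g(x) = x F(c, d; c + d; x) = sum_n A_n x^(n+1).  The proof passes to
   the logarithmic variable T = -ln (1 - x): the point s^p / (1 + s^p) becomes
   T = ln (1 + s^p), and since 1 + s^(p+q) <= (1 + s^p)(1 + s^q) the theorem
   follows once h(T) = g(1 - e^(-T)) is nondecreasing and subadditive on
   [0, +oo).  We have h'(T) = M(x) with M(x) = (1 - x) g'(x), whose power
   series has coefficients m_0 = A_0 and m_(n+1) = (n+2) A_(n+1) - (n+1) A_n.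
   Hence h is nondecreasing and concave (so subadditive, h(0) = 0) as soon as
   A_n >= 0 and (n + 1) A_n is nonincreasing. *)

Lemma series_le (u v : nat -> R) (lu lv : R) :
  (forall n, u n <= v n) -> is_series u lu -> is_series v lv -> lu <= lv.
Proof.
  intros Huv Hu Hv.
  apply (is_lim_seq_le (sum_n u) (sum_n v) lu lv); [| exact Hu | exact Hv].
  intros n. rewrite !sum_n_Reals. apply sum_Rle. intros; apply Huv.
Qed.

Lemma series_nonneg (u : nat -> R) (l : R) :
  (forall n, 0 <= u n) -> is_series u l -> 0 <= l.
Proof.
  intros Hu Hl.
  apply (is_lim_seq_le (fun _ => 0) (sum_n u) 0 l); [| apply is_lim_seq_const | exact Hl].
  intros n. rewrite sum_n_Reals. apply cond_pos_sum. intros; apply Hu.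
Qed.

Lemma nondecreasing_of_derive_nonneg (f f' : R -> R) (a b : R) :
  a <= b ->
  (forall x, a <= x <= b -> is_derive f x (f' x)) ->
  (forall x, a <= x <= b -> 0 <= f' x) ->
  f a <= f b.
Proof.
  intros Hab Hder Hpos.
  destruct (Rle_lt_or_eq_dec a b Hab) as [Hlt | <-]; [| lra].
  destruct (MVT_cor2 f f' a b Hlt) as [xi [Heq Hxi]].
  - intros x Hx. apply is_derive_Reals, Hder, Hx.
  - assert (0 <= f' xi * (b - a)) by (apply Rmult_le_pos; [apply Hpos | ]; lra).
    lra.
Qed.

Lemma subadditive_of_derive_nonincreasing (f f' : R -> R) :
  (forall x, 0 <= x -> is_derive f x (f' x)) ->
  (forall x y, 0 <= x <= y -> f' y <= f' x) ->
  forall a b, 0 <= a -> 0 <= b -> f (a + b) + f 0 <= f a + f b.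
Proof.
  intros Hder Hmono a b Ha Hb.
  (* the increment x |-> f x - f (x + b) is nondecreasing on [0, a] *)
  assert (Hincr : f 0 - f (0 + b) <= f a - f (a + b)).
  { apply (nondecreasing_of_derive_nonneg (fun x => f x - f (x + b))
             (fun x => f' x - f' (x + b))); [lra | |].
    - intros x Hx. apply (is_derive_minus f (fun x => f (x + b))); [apply Hder; lra |].
      assert (Hshift : is_derive (fun x => x + b) x 1)
        by (auto_derive; [exact I | ring]).
      pose proof (is_derive_comp f (fun x => x + b) x (f' (x + b)) 1
                    (Hder (x + b) ltac:(lra)) Hshift) as Hc.
      replace (f' (x + b)) with (scal 1 (f' (x + b)));
        [exact Hc | unfold scal; simpl; unfold mult; simpl; ring].
    - intros x Hx. pose proof (Hmono x (x + b) ltac:(lra)). lra. }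
  rewrite Rplus_0_l in Hincr. lra.
Qed.

Section WeightedNonincreasingSeries.

Variable a : nat -> R.
Hypothesis a_nonneg : forall n, 0 <= a n.
Hypothesis weighted_noninc : forall n, INR (S (S n)) * a (S n) <= INR (S n) * a n.

Lemma weighted_coef_le n : INR (S n) * a n <= a 0%nat.
Proof.
  induction n as [| n IH]; [simpl; lra |].
  specialize (weighted_noninc n). lra.
Qed.

(* The coefficients are bounded, so the radius of convergence is at least 1. *)
Lemma radius_ge_1 : Rbar_le 1 (CV_radius a).
Proof.
  destruct (CV_radius_bounded a) as [Hub _]. apply Hub.
  exists (a 0%nat). intros n. rewrite pow1, Rmult_1_r, Rabs_pos_eq by apply a_nonneg.
  pose proof (weighted_coef_le n) as Hw. pose proof (a_nonneg n).
  rewrite S_INR in Hw. pose proof (pos_INR n). nra.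
Qed.

Definition shifted_coef : nat -> R := @PS_incr_1 R_AbsRing R_NormedModule a.
Definition deriv_coef : nat -> R := PS_derive shifted_coef.

Lemma deriv_coef_eq n : deriv_coef n = INR (S n) * a n.
Proof. reflexivity. Qed.

Lemma inside_radius_shifted x :
  Rabs x < 1 -> Rbar_lt (Rabs x) (CV_radius shifted_coef).
Proof.
  intros Hx. unfold shifted_coef. rewrite CV_radius_incr_1.
  exact (Rbar_lt_le_trans (Rabs x) 1 _ Hx radius_ge_1).
Qed.

Lemma inside_radius_deriv x :
  Rabs x < 1 -> Rbar_lt (Rabs x) (CV_radius deriv_coef).
Proof.
  intros Hx. unfold deriv_coef. rewrite CV_radius_derive.
  now apply inside_radius_shifted.
Qed.

Definition gser (x : R) : R := PSeries shifted_coef x.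
Definition Mser (x : R) : R := (1 - x) * PSeries deriv_coef x.

Lemma gser_derive x : Rabs x < 1 -> is_derive gser x (PSeries deriv_coef x).
Proof. intros Hx. apply is_derive_PSeries, inside_radius_shifted, Hx. Qed.

Lemma gser_0 : gser 0 = 0.
Proof. unfold gser, shifted_coef. rewrite PSeries_incr_1. ring. Qed.

Lemma deriv_series x :
  Rabs x < 1 -> is_series (fun n => deriv_coef n * x ^ n) (PSeries deriv_coef x).
Proof.
  intros Hx. apply is_pseries_R, PSeries_correct, CV_radius_inside.
  now apply inside_radius_deriv.
Qed.

Lemma Mser_nonneg x : 0 <= x < 1 -> 0 <= Mser x.
Proof.
  intros Hx. unfold Mser. apply Rmult_le_pos; [lra |].
  apply (series_nonneg (fun n => deriv_coef n * x ^ n)).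
  - intros n. rewrite deriv_coef_eq. pose proof (pos_INR (S n)).
    apply Rmult_le_pos; [apply Rmult_le_pos; auto | apply pow_le; lra].
  - apply deriv_series. rewrite Rabs_pos_eq; lra.
Qed.

Definition Mcoef : nat -> R :=
  @PS_minus R_AbsRing R_NormedModule deriv_coef
    (@PS_incr_1 R_AbsRing R_NormedModule deriv_coef).

Lemma Mcoef_S_nonpos n : Mcoef (S n) <= 0.
Proof.
  change (deriv_coef (S n) + - deriv_coef n <= 0). rewrite !deriv_coef_eq.
  specialize (weighted_noninc n). lra.
Qed.

Lemma Mser_series x : Rabs x < 1 -> is_series (fun n => Mcoef n * x ^ n) (Mser x).
Proof.
  intros Hx. apply is_pseries_R.
  assert (HD : is_pseries deriv_coef x (PSeries deriv_coef x))
    by (apply PSeries_correct, CV_radius_inside, inside_radius_deriv, Hx).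
  pose proof (is_pseries_minus _ _ _ _ _ HD (is_pseries_incr_1 _ _ _ HD)) as HM.
  replace (Mser x) with (plus (PSeries deriv_coef x) (opp (scal x (PSeries deriv_coef x))));
    [exact HM |].
  unfold Mser, plus, opp, scal; simpl. unfold mult; simpl. ring.
Qed.

Lemma Mser_nonincreasing x y : 0 <= x -> x <= y -> y < 1 -> Mser y <= Mser x.
Proof.
  intros Hx Hxy Hy.
  apply (series_le (fun n => Mcoef n * y ^ n) (fun n => Mcoef n * x ^ n)).
  - intros [| n]; [simpl; lra |].
    pose proof (Mcoef_S_nonpos n). pose proof (pow_incr x y (S n) ltac:(lra)).
    nra.
  - apply Mser_series. rewrite Rabs_pos_eq; lra.
  - apply Mser_series. rewrite Rabs_pos_eq; lra.
Qed.

Definition hlog (T : R) : R := gser (1 - exp (- T)).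

Lemma log_var_nondecreasing T U : T <= U -> 1 - exp (- T) <= 1 - exp (- U).
Proof.
  intros HTU. destruct (Rle_lt_or_eq_dec T U HTU) as [Hlt | ->]; [| lra].
  pose proof (exp_increasing (- U) (- T) ltac:(lra)). lra.
Qed.

Lemma log_var_bounds T : 0 <= T -> 0 <= 1 - exp (- T) < 1.
Proof.
  intros HT. pose proof (exp_pos (- T)) as Hpos.
  pose proof (log_var_nondecreasing 0 T HT) as Hmono.
  rewrite Ropp_0, exp_0 in Hmono. lra.
Qed.

Lemma hlog_derive T : 0 <= T -> is_derive hlog T (Mser (1 - exp (- T))).
Proof.
  intros HT. pose proof (log_var_bounds T HT) as Hx.
  assert (Hin : is_derive (fun T => 1 - exp (- T)) T (exp (- T)))
    by (auto_derive; [exact I | ring]).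
  pose proof (is_derive_comp gser (fun T => 1 - exp (- T)) T _ _
                (gser_derive (1 - exp (- T)) ltac:(rewrite Rabs_pos_eq; lra)) Hin) as Hc.
  unfold hlog. replace (Mser (1 - exp (- T))) with
    (scal (exp (- T)) (PSeries deriv_coef (1 - exp (- T)))); [exact Hc |].
  unfold Mser, scal; simpl. unfold mult; simpl. ring.
Qed.

Lemma hlog_0 : hlog 0 = 0.
Proof. unfold hlog. rewrite Ropp_0, exp_0, Rminus_diag. apply gser_0. Qed.

(* M >= 0 makes h nondecreasing; M nonincreasing makes h concave, hence
   subadditive since h(0) = 0. *)
Lemma hlog_nondecreasing T U : 0 <= T -> T <= U -> hlog T <= hlog U.
Proof.
  intros HT HTU.
  apply (nondecreasing_of_derive_nonneg hlog (fun V => Mser (1 - exp (- V)))); [lra | |].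
  - intros V HV. apply hlog_derive; lra.
  - intros V HV. apply Mser_nonneg, log_var_bounds; lra.
Qed.

Lemma hlog_subadditive T U : 0 <= T -> 0 <= U -> hlog (T + U) <= hlog T + hlog U.
Proof.
  intros HT HU.
  pose proof (subadditive_of_derive_nonincreasing hlog (fun V => Mser (1 - exp (- V)))
                hlog_derive) as Hsub.
  rewrite hlog_0 in Hsub. enough (hlog (T + U) + 0 <= hlog T + hlog U) by lra.
  apply Hsub; auto. intros V W HVW.
  pose proof (log_var_bounds W ltac:(lra)).
  apply Mser_nonincreasing; [apply log_var_bounds; lra | apply log_var_nondecreasing; lra | lra].
Qed.

Lemma gser_ratio t : 0 < t -> gser (t / (1 + t)) = hlog (ln (1 + t)).
Proof.
  intros Ht. unfold hlog. rewrite exp_Ropp, exp_ln by lra. f_equal. field. lra.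
Qed.

(* Main inequality in the multiplicative variable: since
   ln (1 + t u) <= ln (1 + t) + ln (1 + u), monotonicity and subadditivity of h
   give g(tu/(1+tu)) <= g(t/(1+t)) + g(u/(1+u)). *)
Lemma gser_ratio_submultiplicative t u : 0 < t -> 0 < u ->
  gser (t * u / (1 + t * u)) <= gser (t / (1 + t)) + gser (u / (1 + u)).
Proof.
  intros Ht Hu. assert (Htu : 0 < t * u) by nra.
  rewrite !gser_ratio by assumption.
  assert (Hlog : ln (1 + t * u) <= ln (1 + t) + ln (1 + u))
    by (rewrite <- ln_mult by lra; apply ln_le; nra).
  assert (Hnn : forall z, 0 < z -> 0 <= ln (1 + z))
    by (intros z Hz; rewrite <- ln_1; apply ln_le; lra).
  apply Rle_trans with (hlog (ln (1 + t) + ln (1 + u))).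
  - apply hlog_nondecreasing; [apply Hnn, Htu | exact Hlog].
  - apply hlog_subadditive; apply Hnn; assumption.
Qed.

End WeightedNonincreasingSeries.

Definition hyp_coef (c d : R) (n : nat) : R :=
  poch c n * poch d n / poch (c + d) n / INR (Factorial.fact n).

Lemma poch_pos (a : R) (n : nat) : 0 < a -> 0 < poch a n.
Proof.
  intros Ha. induction n as [| n IH]; simpl; [lra |].
  apply Rmult_lt_0_compat; [exact IH |]. pose proof (pos_INR n). lra.
Qed.

Section HypergeometricCoefficients.

Variables c d : R.
Hypothesis c_pos : 0 < c.
Hypothesis d_pos : 0 < d.
Hypothesis cd_le_1 : c * d <= 1.

Lemma hyp_coef_pos n : 0 < hyp_coef c d n.
Proof.
  unfold hyp_coef. pose proof (INR_fact_lt_0 n).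
  pose proof (poch_pos c n c_pos). pose proof (poch_pos d n d_pos).
  pose proof (poch_pos (c + d) n ltac:(lra)).
  apply Rdiv_lt_0_compat; [apply Rdiv_lt_0_compat |]; auto.
  apply Rmult_lt_0_compat; auto.
Qed.

Lemma hyp_coef_S n : hyp_coef c d (S n) =
  hyp_coef c d n * ((c + INR n) * (d + INR n) / ((c + d + INR n) * (INR n + 1))).
Proof.
  unfold hyp_coef.
  change (Factorial.fact (S n)) with (S n * Factorial.fact n)%nat.
  rewrite mult_INR, S_INR. simpl poch.
  pose proof (poch_pos (c + d) n ltac:(lra)). pose proof (INR_fact_neq_0 n).
  pose proof (pos_INR n). field. repeat split; lra.
Qed.

(* AM-GM together with cd <= 1: c + d >= 2 sqrt(cd) >= 2cd. *)
Lemma two_prod_le_sum : 2 * (c * d) <= c + d.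
Proof.
  assert (Hcd0 : 0 < c * d) by nra.
  assert (Hsq : (2 * (c * d)) * (2 * (c * d)) <= (c + d) * (c + d)).
  { pose proof (Rle_0_sqr (c - d)). unfold Rsqr in *.
    pose proof (Rmult_le_compat_l (c * d) (c * d) 1 ltac:(lra) cd_le_1). nra. }
  destruct (Rle_lt_dec (2 * (c * d)) (c + d)) as [| Hlt]; [assumption |].
  exfalso. nra.
Qed.

(* The polynomial inequality behind the monotonicity of (n + 1) A_n:
   (k+1)^2 (c+d+k) - (k+2)(c+k)(d+k) = k (1 - cd) + (c + d - 2cd) >= 0. *)
Lemma weighted_ratio_le (k : R) : 0 <= k ->
  (k + 2) * ((c + k) * (d + k)) <= (k + 1) * ((k + 1) * (c + d + k)).
Proof.
  intros Hk. pose proof two_prod_le_sum. nra.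
Qed.

Lemma hyp_coef_weighted_noninc n :
  INR (S (S n)) * hyp_coef c d (S n) <= INR (S n) * hyp_coef c d n.
Proof.
  rewrite hyp_coef_S, !S_INR.
  pose proof (pos_INR n) as Hn. pose proof (hyp_coef_pos n) as HA.
  pose proof (weighted_ratio_le (INR n) Hn) as Hr.
  assert (Hden : 0 < (c + d + INR n) * (INR n + 1)) by nra.
  assert (Hratio : (INR n + 1 + 1) * ((c + INR n) * (d + INR n) /
                     ((c + d + INR n) * (INR n + 1))) <= INR n + 1).
  { apply Rmult_le_reg_r with ((c + d + INR n) * (INR n + 1)); [exact Hden |].
    unfold Rdiv. rewrite Rmult_assoc, (Rmult_assoc _ (/ _)), Rinv_l by lra. nra. }
  nra.
Qed.

End HypergeometricCoefficients.

Lemma is_g_gser c d x y : is_g c d x y -> y = gser (hyp_coef c d) x.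
Proof.
  intros [v [Hv ->]]. apply is_series_Reals in Hv.
  assert (Hs : is_series (fun n => hyp_coef c d n * x ^ n) v).
  { apply (@is_series_ext R_AbsRing R_NormedModule (hyp_term c d (c + d) x)); [| exact Hv].
    intros n. unfold hyp_term, hyp_coef, Rdiv. simpl. ring. }
  unfold gser, shifted_coef. rewrite PSeries_incr_1.
  unfold PSeries. rewrite (is_series_unique _ _ Hs). reflexivity.
Qed.

Theorem mainTheorem10 :
  forall (c d : R), 0 < c -> 0 < d -> c * d <= 1 ->
  forall (s p q : R), 0 < s -> 0 < p -> 0 < q ->
  forall (g1 g2 g3 : R),
    is_g c d (Rpower s p / (1 + Rpower s p)) g1 ->
    is_g c d (Rpower s q / (1 + Rpower s q)) g2 ->
    is_g c d (Rpower s (p + q) / (1 + Rpower s (p + q))) g3 ->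
    g1 + g2 >= g3.
Proof.
  intros c d Hc Hd Hcd s p q Hs Hp Hq g1 g2 g3 H1 H2 H3.
  apply is_g_gser in H1, H2, H3. subst g1 g2 g3.
  assert (Hpow : forall r, 0 < Rpower s r) by (intros r; apply exp_pos).
  rewrite Rpower_plus.
  apply Rle_ge, gser_ratio_submultiplicative; [| | apply Hpow | apply Hpow].
  - intros n. apply Rlt_le, hyp_coef_pos; assumption.
  - intros n. apply hyp_coef_weighted_noninc; assumption.
Qed.
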